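(* Let $G\in\mathscr G_d$ and let $\mu$ be a nonzero finite Borel measure on $S^{n-1}$ not concentrated on any closed hemisphere. If $\{K_i\}_{i\in\mathbb N}\subseteq\mathscr K^n_{(o)}$ satisfies $$\sup_{i\in\mathbb N}\int_{S^{n-1}}G(\xi,\rho_{K_i^*}(\xi))\,d\mu(\xi)<+\infty,$$ then there is a finite constant $R$ with $K_i\subseteq RB^n$ for all $i\in\mathbb N$.
   Context: $S^{n-1}$ unit sphere, $B^n$ unit ball of $\mathbb R^n$, $n\ge2$. $\mathscr K^n_{(o)}$: compact convex sets with the origin in their interior; $\rho_K(x)=\max\{t\ge0:tx\in K\}$, $K^*=\{x:x\cdot y\le1\ \forall y\in K\}$. $\mathscr G_d$ is the set of $G:S^{n-1}\times(0,\infty)\to(0,\infty)$ such that $G$ and $G_t=\partial G/\partial t$ are continuous, and for each $u\in S^{n-1}$: $G_t(u,\cdot)<0$ on $(0,\infty)$, $\lim_{t\to0^+}G(u,t)=\infty$, $\lim_{t\to\infty}G(u,t)=0$. $\mu$ is not concentrated on any closed hemisphere if $\int_{S^{n-1}}(u\cdot\xi)_+\,d\mu(\xi)>0$ for all $u\in S^{n-1}$. *)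

From HB Require Import structures.
From mathcomp Require Import all_boot all_order all_algebra.
From mathcomp Require Import all_classical all_reals all_analysis.
Set Implicit Arguments. Unset Strict Implicit. Unset Printing Implicit Defensive.
Import Order.TTheory GRing.Theory Num.Theory.
Import numFieldNormedType.Exports.
Local Open Scope classical_set_scope.
Local Open Scope ring_scope.

Definition dotv (R : realType) (n : nat) (x y : 'rV[R]_n) : R :=
  \sum_(i < n) x ord0 i * y ord0 i.

Definition enorm (R : realType) (n : nat) (x : 'rV[R]_n) : R :=
  Num.sqrt (dotv x x).

Definition sphere (R : realType) (n : nat) : set 'rV[R]_n :=
  [set x | enorm x = 1].

Definition eball (R : realType) (n : nat) (r : R) : set 'rV[R]_n :=
  [set x | enorm x <= r].

Definition borelRn (R : realType) (n : nat) :=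
  g_sigma_algebraType (@open 'rV[R]_n).

Definition convex_body_o (R : realType) (n : nat) (K : set 'rV[R]_n) : Prop :=
  compact K /\
  (forall x y (t : R), K x -> K y -> 0 <= t -> t <= 1 ->
     K ((1 - t) *: x + t *: y)) /\
  (interior K) 0.

Definition radial (R : realType) (n : nat) (K : set 'rV[R]_n) (x : 'rV[R]_n) : R :=
  sup [set t : R | 0 <= t /\ K (t *: x)].

Definition polar (R : realType) (n : nat) (K : set 'rV[R]_n) : set 'rV[R]_n :=
  [set x | forall y, K y -> dotv x y <= 1].

Definition class_Gd (R : realType) (n : nat) (G : 'rV[R]_n -> R -> R) : Prop :=
  (forall u t, sphere u -> 0 < t -> 0 < G u t) /\
  {within (@sphere R n) `*` `]0, +oo[%classic,
     continuous (fun p : 'rV[R]_n * R => G p.1 p.2)} /\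
  (forall u t, sphere u -> 0 < t -> derivable (G u) t 1) /\
  {within (@sphere R n) `*` `]0, +oo[%classic,
     continuous (fun p : 'rV[R]_n * R => derive1 (G p.1) p.2)} /\
  (forall u t, sphere u -> 0 < t -> derive1 (G u) t < 0) /\
  (forall u, sphere u -> G u t @[t --> 0^'+] --> +oo) /\
  (forall u, sphere u -> G u t @[t --> +oo] --> 0).

Definition pospart (R : realType) (a : R) : R := Num.max a 0.

From HB Require Import structures.
From mathcomp Require Import all_boot all_order all_algebra.
From mathcomp Require Import all_classical all_reals all_analysis.
From mathcomp Require Import ring lra measurable_realfun.
Set Implicit Arguments. Unset Strict Implicit. Unset Printing Implicit Defensive.
Import Order.TTheory GRing.Theory Num.Theory.
Import numFieldNormedType.Exports.
Local Open Scope classical_set_scope.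
Local Open Scope ring_scope.

(* pos_cosine u, the integral of (u.xi)_+ over the sphere, is Lipschitz in u
   and positive on the compact sphere, hence bounded below by some eta > 0.
   Likewise, G decreases in t and blows up at t = 0 continuously in xi, so
   compactness yields t0 > 0 with G > c on sphere x (0, t0].  If x = rho u lies
   in K, then radial (polar K) xi <= 1/(x.xi) < t0 wherever u.xi > s := 1/(rho t0),
   whence  int G(xi, radial (polar K) xi) >= (c/n) int (u.xi - s)_+
   >= (c/n) (eta - s mu(sphere)).  For rho large this is at least (c/n)(eta/2), and
   c is chosen so that this contradicts the uniform bound M. *)

Section euclidean.
Variables (R : realType) (n : nat).
Implicit Types x y z : 'rV[R]_n.

Lemma dotvC x y : dotv x y = dotv y x.
Proof. by apply: eq_bigr => i _; rewrite mulrC. Qed.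

Lemma dotvZl a x y : dotv (a *: x) y = a * dotv x y.
Proof. by rewrite /dotv mulr_sumr; apply: eq_bigr => i _; rewrite mxE mulrA. Qed.

Lemma dotvBl x y z : dotv (x - y) z = dotv x z - dotv y z.
Proof. by rewrite /dotv -sumrB; apply: eq_bigr => i _; rewrite !mxE mulrBl. Qed.

Lemma dotvv_ge0 x : 0 <= dotv x x.
Proof. by apply: sumr_ge0 => i _; rewrite -expr2 sqr_ge0. Qed.

Lemma enorm_sqr x : enorm x ^+ 2 = dotv x x.
Proof. exact/sqr_sqrtr/dotvv_ge0. Qed.

Lemma enormZ a x : enorm (a *: x) = `|a| * enorm x.
Proof.
rewrite /enorm dotvZl dotvC dotvZl mulrA -expr2 sqrtrM ?sqr_ge0 //.
by rewrite sqrtr_sqr.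
Qed.

Lemma sphere_normalize x : 0 < enorm x -> sphere ((enorm x)^-1 *: x).
Proof.
by move=> x_gt0; rewrite /sphere /= enormZ gtr0_norm ?invr_gt0 // mulVf ?gt_eqF.
Qed.

Lemma sphere_dotvv x : sphere x -> dotv x x = 1.
Proof. by rewrite -enorm_sqr => ->; rewrite expr1n. Qed.

Lemma sphere_coord_le1 {x} i : sphere x -> `|x ord0 i| <= 1.
Proof.
move=> /sphere_dotvv xx1; rewrite -(ler_pXn2r (isT : 0 < 2)%N) ?nnegrE //.
rewrite expr1n real_normK ?num_real // -xx1 /dotv (bigD1 i) //= -expr2 lerDl.
by apply: sumr_ge0 => j _; rewrite -expr2 sqr_ge0.
Qed.

Lemma norm_dotv_le x y a b : (forall i, `|x ord0 i| <= a) ->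
  (forall i, `|y ord0 i| <= b) -> `|dotv x y| <= n%:R * (a * b).
Proof.
move=> xa yb; apply: le_trans (ler_norm_sum _ _ _) _.
rewrite mulr_natl -[n in _ *+ n]card_ord -sumr_const.
by apply: ler_sum => i _; rewrite normrM ler_pM.
Qed.

Lemma norm_dotv_sphere_le x y : sphere x -> sphere y -> `|dotv x y| <= n%:R.
Proof.
move=> sx sy.
have := norm_dotv_le (sphere_coord_le1^~ sx) (sphere_coord_le1^~ sy).
by rewrite !mulr1.
Qed.

Lemma continuous_dotvv : continuous (fun x : 'rV[R]_n => dotv x x).
Proof.
apply: (@continuous_big _ _ +%R 0 xpredT) => [|i _]; first exact: add_continuous.
by move=> x; apply: continuousM; exact: coord_continuous.
Qed.

Lemma closed_sphere : closed (@sphere R n).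
Proof.
have -> : @sphere R n = (fun x => dotv x x) @^-1` [set 1].
  apply/seteqP; split => x /=; first exact: sphere_dotvv.
  by move=> xx1; rewrite /sphere /enorm /= xx1 sqrtr1.
by apply: preimage_closed => [x _|]; [exact: continuous_dotvv | exact: closed_eq].
Qed.

Lemma compact_sphere : compact (@sphere R n).
Proof.
apply: bounded_closed_compact closed_sphere.
exists 1; split; first exact: num_real.
move=> M M1 x sx; rewrite /Num.norm /= mx_normrE.
apply: bigmax_le => [|[i j] _]; first lra.
by rewrite (ord1 i); apply: le_trans (sphere_coord_le1 j sx) _; lra.
Qed.

Lemma measurable_coord i :
  measurable_fun setT (fun x : borelRn R n => (x : 'rV[R]_n) ord0 i).
Proof.
apply: measurability; first exact: RGenOInfty.measurableE.
move=> _ [_ [a ->] <-]; apply: sub_sigma_algebra; rewrite /= setTI.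
by apply: (continuousP _).1; [exact: coord_continuous | exact: interval_open].
Qed.

Lemma measurable_dotv y (D : set (borelRn R n)) : measurable_fun D (dotv y).
Proof.
apply: (measurable_funS measurableT) => //; apply: measurable_sum => i.
by apply: measurable_funM; [exact: measurable_cst | exact: measurable_coord].
Qed.

Lemma measurable_sphere : measurable (@sphere R n : set (borelRn R n)).
Proof.
rewrite -[X in measurable X]setCK; apply: measurableC; apply: sub_sigma_algebra.
exact: closed_openC closed_sphere.
Qed.

End euclidean.

Lemma compact_uniform_pos (R : realType) (T : topologicalType) (A : set T)
    (P : R -> T -> Prop) : compact A ->
  (forall x, A x -> \forall y \near x & e \near 0^'+, A y -> P e y) ->
  exists2 e, 0 < e & forall y, A y -> P e y.
Proof.
move=> /compact_near_coveringP /near_covering_withinP cA locP.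
have /filter_ex [e [e0 Pe]] : \forall e \near (0 : R)^'+, 0 < e /\ A `<=` P e.
  by near=> e; split; [near: e; exact: nbhs_right_gt | near: e; exact: cA].
by exists e.
Unshelve. all: by end_near. Qed.

Section integral_bounds.
Context d (T : measurableType d) (R : realType) (mu : {measure set T -> \bar R}).
Implicit Types (D : set T).

(* The integrand xi |-> G xi (radial (polar K) xi) to which this is applied
   is not known to be measurable. *)
Lemma ge0_le_integral_nomeas D (f1 f2 : T -> \bar R) :
  (forall x, D x -> (0 <= f1 x)%E) -> (forall x, D x -> (f1 x <= f2 x)%E) ->
  (\int[mu]_(x in D) f1 x <= \int[mu]_(x in D) f2 x)%E.
Proof.
move=> f10 f12; have f20 x : D x -> (0 <= f2 x)%E.
  by move=> Dx; apply: le_trans (f12 x Dx); exact: f10.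
rewrite !ge0_integralE //; apply: ereal_sup_le => _ [h hf <-]; exists h => // x.
apply: le_trans (hf x) _; rewrite /patch; case: ifP => // /[!inE] Dx.
exact: f12.
Qed.

Lemma le_integral_addr_cst D (p q : T -> R) (k : R) : measurable D ->
  measurable_fun D p -> measurable_fun D q ->
  (forall x, D x -> 0 <= p x) -> (forall x, D x -> 0 <= q x) -> 0 <= k ->
  (forall x, D x -> p x <= q x + k) ->
  (\int[mu]_(x in D) (p x)%:E <= \int[mu]_(x in D) (q x)%:E + k%:E * mu D)%E.
Proof.
move=> mD mp mq p0 q0 k0 pqk; rewrite -integral_cst // -ge0_integralD //.
- apply: ge0_le_integral => //; first exact/measurable_EFinP.
  by apply: emeasurable_funD; [exact/measurable_EFinP | exact: measurable_cst].
- exact/measurable_EFinP.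
Qed.

End integral_bounds.

Section class_Gd.
Variables (R : realType) (n : nat) (G : 'rV[R]_n -> R -> R).
Hypothesis hG : class_Gd G.

Lemma Gd_gt0 u t : sphere u -> 0 < t -> 0 < G u t.
Proof. by case: hG => + _; apply. Qed.

Lemma Gd_antitone {u t1 t2} : sphere u -> 0 < t1 -> t1 <= t2 -> G u t2 <= G u t1.
Proof.
move=> su t10 t12; have [_ [_ [Gder [_ [Gdec _]]]]] := hG.
have Gder' x : x \in `]0, t2 + 1[ -> derivable (G u) x 1.
  by rewrite in_itv /= => /andP[x0 _]; exact: Gder.
apply: (@ler0_derive1_le_oo _ (G u) 0 (t2 + 1)) => //.
- by move=> x /[!in_itv] /andP[x0 _]; exact/ltW/Gdec.
- move=> x x_in; apply/differentiable_continuous; rewrite -derivable1_diffP.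
  by apply: Gder'; move: x_in; rewrite inE.
- by rewrite in_itv /=; apply/andP; split; lra.
- by rewrite in_itv /=; apply/andP; split; lra.
Qed.

Lemma Gd_gt_near u t c : sphere u -> 0 < t -> c < G u t ->
  \forall v \near u, sphere v -> c < G v t.
Proof.
move=> su t0 cG; have [_ [Gcont _]] := hG.
have St : ((@sphere R n) `*` `]0, +oo[%classic) (u, t).
  by split => //=; rewrite in_itv /= andbT.
have := (subspace_continuousP _ _).1 Gcont (u, t) St [set r | c < r].
move=> /(_ (lt_nbhsr cG)).
case=> -[P Q] /= [Pu Qt] PQ; apply: filterS Pu => v Pv sv.
apply: (PQ (v, t)); first by split => //; exact: nbhs_singleton.
by split => //=; rewrite in_itv /= andbT.
Qed.

Lemma Gd_uniform_gt c : exists2 t0, 0 < t0 &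
  forall xi, sphere xi -> forall t, 0 < t -> t <= t0 -> c < G xi t.
Proof.
apply: (@compact_uniform_pos R _ _
    (fun t0 xi => forall t, 0 < t -> t <= t0 -> c < G xi t) (@compact_sphere R n)).
move=> u su; have [_ [_ [_ [_ [_ [Gblowup _]]]]]] := hG.
have /filter_ex [t1 [t1_gt0 cGt1]] :
    \forall t \near (0 : R)^'+, 0 < t /\ c < G u t.
  near=> t; split; first by near: t; exact: nbhs_right_gt.
  by near: t; move: (Gblowup u su) => /cvgryPgt; exact.
near=> v e => /= sv t t_gt0 te.
have e_le_t1 : e <= t1 by near: e; exact: nbhs_right_le.
apply: lt_le_trans _ (Gd_antitone sv t_gt0 (le_trans te e_le_t1)).
by move: sv; near: v; exact: Gd_gt_near.
Unshelve. all: by end_near. Qed.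

End class_Gd.

Section pospart.
Variable R : realType.
Implicit Types a b k : R.

Lemma pospart_ge0 a : 0 <= pospart a.
Proof. by rewrite /pospart le_max lexx orbT. Qed.

Lemma pospart_le_norm a : pospart a <= `|a|.
Proof. by rewrite /pospart ge_max normr_ge0 ler_norm. Qed.

Lemma pospart_le_add a b k : 0 <= k -> a <= b + k -> pospart a <= pospart b + k.
Proof.
rewrite /pospart => k0 abk; rewrite ge_max; apply/andP; split.
  by apply: le_trans abk _; rewrite lerD2r le_max lexx.
by rewrite addr_ge0 // le_max lexx orbT.
Qed.

Lemma measurable_pospart d (T : measurableType d) (D : set T) (f : T -> R) :
  measurable_fun D f -> measurable_fun D (fun x => pospart (f x)).
Proof. by move=> mf; apply: measurable_maxr mf (measurable_cst _). Qed.

End pospart.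

Section positive_cosine_transform.
Variables (R : realType) (n : nat) (mu : {measure set (borelRn R n) -> \bar R}).
Hypothesis mu_fin : (mu setT < +oo)%E.
Implicit Types u v : 'rV[R]_n.

Definition pos_cosine u :=
  (\int[mu]_(xi in @sphere R n) (pospart (dotv u xi))%:E)%E.

Lemma sphere_measure_fin_num : mu (@sphere R n) \is a fin_num.
Proof.
rewrite ge0_fin_numE // (le_lt_trans _ mu_fin) //.
by rewrite le_measure ?inE //; exact: measurable_sphere.
Qed.

Let m := fine (mu (@sphere R n)).

Let mu_sphereE : mu (@sphere R n) = m%:E.
Proof. by rewrite fineK // sphere_measure_fin_num. Qed.

Let m_ge0 : 0 <= m. Proof. exact: fine_ge0. Qed.

Lemma pos_cosine_le_shift u s : 0 <= s ->
  (pos_cosine u <= \int[mu]_(xi in @sphere R n) (pospart (dotv u xi - s))%:E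
                   + s%:E * mu (@sphere R n))%E.
Proof.
move=> s0; apply: le_integral_addr_cst => //; first exact: measurable_sphere.
- by apply: measurable_pospart; exact: measurable_dotv.
- apply/measurable_pospart/measurable_funB; first exact: measurable_dotv.
  exact: measurable_cst.
- by move=> *; exact: pospart_ge0.
- by move=> *; exact: pospart_ge0.
- by move=> xi _; apply: pospart_le_add; rewrite // subrK.
Qed.

Lemma pos_cosine_lipschitz u v (e : R) : 0 <= e ->
  (forall i, `|u ord0 i - v ord0 i| <= e) ->
  (pos_cosine u <= pos_cosine v + (n%:R * e)%:E * mu (@sphere R n))%E.
Proof.
move=> e0 uve; apply: le_integral_addr_cst => //; first exact: measurable_sphere.
- by apply: measurable_pospart; exact: measurable_dotv.
- by apply: measurable_pospart; exact: measurable_dotv.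
- by move=> *; exact: pospart_ge0.
- by move=> *; exact: pospart_ge0.
- by rewrite mulr_ge0.
move=> xi sxi; apply: pospart_le_add; first by rewrite mulr_ge0.
rewrite -lerBlDl -dotvBl; apply: le_trans (ler_norm _) _.
have uve' i : `|(u - v) ord0 i| <= e by rewrite !mxE.
by have := norm_dotv_le uve' (fun i => sphere_coord_le1 i sxi); rewrite mulr1.
Qed.

Lemma pos_cosine_fin_num u : sphere u -> pos_cosine u \is a fin_num.
Proof.
move=> su; rewrite ge0_fin_numE; last first.
  by apply: integral_ge0 => xi _; rewrite lee_fin pospart_ge0.
apply: le_lt_trans (ltry (n%:R * m)).
rewrite EFinM -mu_sphereE -integral_cst; last exact: measurable_sphere.
apply: ge0_le_integral_nomeas => xi sxi; first by rewrite lee_fin pospart_ge0.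
by rewrite lee_fin (le_trans (pospart_le_norm _)) // norm_dotv_sphere_le.
Qed.

Lemma pos_cosine_uniform_gt0 : (forall u, sphere u -> (0 < pos_cosine u)%E) ->
  exists2 eta, 0 < eta & forall u, sphere u -> (eta%:E <= pos_cosine u)%E.
Proof.
move=> pos_cosine_gt0.
apply: (@compact_uniform_pos R _ _ (fun e u => e%:E <= pos_cosine u)%E
  (@compact_sphere R n)) => u su.
set a := fine (pos_cosine u).
have phiuE : pos_cosine u = a%:E by rewrite fineK // pos_cosine_fin_num.
have a_gt0 : 0 < a by rewrite -lte_fin -phiuE pos_cosine_gt0.
pose d := a / (2 * (n%:R * m + 1)).
have nm1_gt0 : 0 < n%:R * m + 1 by rewrite ltr_wpDl // mulr_ge0.
have d_gt0 : 0 < d by rewrite divr_gt0 // mulr_gt0.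
have ndm_le : n%:R * d * m <= a / 2.
  have -> : a / 2 = d * (n%:R * m + 1) by rewrite /d; field; rewrite gt_eqF.
  by nra.
near=> v e => /= sv.
have e_le : e <= a / 2 by near: e; apply: nbhs_right_le; rewrite divr_gt0.
have uv : forall i, `|u ord0 i - v ord0 i| <= d.
  near: v; apply: filterS _ (nbhsx_ballx u d d_gt0) => v [_ uvd] i.
  exact/ltW/uvd.
have := pos_cosine_lipschitz (ltW d_gt0) uv.
rewrite phiuE mu_sphereE -(fineK (pos_cosine_fin_num sv)) -!EFinM -EFinD !lee_fin.
lra.
Unshelve. all: by end_near. Qed.

End positive_cosine_transform.

Section radial_polar.
Variables (R : realType) (n : nat) (K : set 'rV[R]_n).
Implicit Types x y xi : 'rV[R]_n.

Lemma polar_dotv_ubound xi x : K x -> 0 < dotv xi x ->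
  ubound [set t | 0 <= t /\ polar K (t *: xi)] (dotv xi x)^-1.
Proof.
move=> Kx xix_gt0 t [_ /(_ x Kx)]; rewrite dotvZl => txi_le1.
by rewrite -[leRHS]mul1r ler_pdivlMr.
Qed.

Lemma radial_polar_le xi x : K x -> 0 < dotv xi x ->
  radial (polar K) xi <= (dotv xi x)^-1.
Proof.
move=> Kx xix_gt0; apply: ge_sup; last exact: polar_dotv_ubound.
by exists 0; split => // y _; rewrite dotvZl mul0r ler01.
Qed.

Hypothesis hK : convex_body_o K.

Lemma convex_body_coord_bounded :
  exists2 B : R, 0 <= B & forall y, K y -> forall i, `|y ord0 i| <= B.
Proof.
have [cK _] := hK.
have /filter_ex [B [B_ge0 KB]] :
    \forall B \near +oo, 0 <= B /\ K `<=` [set y | `|y| <= B].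
  near=> B; split; first by near: B; apply: nbhs_pinfty_ge; exact: num_real.
  by near: B; exact: compact_bounded cK.
exists B => // y Ky i; apply: le_trans (KB y Ky).
by rewrite /Num.norm /= mx_normrE; apply/bigmax_geP; right; exists (ord0, i).
Unshelve. all: by end_near. Qed.

Lemma convex_body_coord_ball :
  exists2 e : R, 0 < e & forall y, (forall i, `|y ord0 i| < e) -> K y.
Proof.
have [_ [_ /nbhs_ballP [e e_gt0 eK]]] := hK.
exists e => // y ye; apply: eK; split => // i j.
by rewrite (ord1 i) /ball /= !mxE sub0r normrN.
Qed.

Lemma radial_polar_gt0 xi : sphere xi -> 0 < radial (polar K) xi.
Proof.
move=> sxi; have [e e_gt0 eK] := convex_body_coord_ball.
have [B B_ge0 KB] := convex_body_coord_bounded.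
have Kexi : K ((e / 2) *: xi).
  apply: eK => i; rewrite mxE normrM gtr0_norm ?divr_gt0 //.
  by have := sphere_coord_le1 i sxi; nra.
have exi_gt0 : 0 < dotv xi ((e / 2) *: xi).
  by rewrite dotvC dotvZl sphere_dotvv // mulr1 divr_gt0.
have nB1_gt0 : 0 < n%:R * B + 1 by rewrite ltr_wpDl // mulr_ge0.
apply: (@lt_le_trans _ _ (n%:R * B + 1)^-1); first by rewrite invr_gt0.
apply: ub_le_sup.
  by exists (dotv xi ((e / 2) *: xi))^-1; exact: polar_dotv_ubound.
split; first by rewrite invr_ge0 ltW.
move=> y Ky; rewrite dotvZl ler_pdivrMl // mulr1.
have := norm_dotv_le (fun i => sphere_coord_le1 i sxi) (KB y Ky).
by rewrite mul1r => /(le_trans (ler_norm _)); lra.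
Qed.

End radial_polar.

Section radial_integral_bound.
Variables (R : realType) (n : nat) (G : 'rV[R]_n -> R -> R).
Hypothesis hG : class_Gd G.
Variables (c t0 : R).
Hypotheses (c_ge0 : 0 <= c) (t0_gt0 : 0 < t0).
Hypothesis G_gt_c :
  forall xi, sphere xi -> forall t, 0 < t -> t <= t0 -> c < G xi t.

(* Where the minorant is positive, (rho u).xi > 1/t0, so radial (polar K) xi < t0
   and G > c; the factor 1/n absorbs the coordinatewise bound (u.xi)_+ <= n. *)
Lemma Gd_radial_polar_ge K rho u xi : convex_body_o K -> 0 < rho ->
  sphere u -> K (rho *: u) -> sphere xi ->
  c / n%:R * pospart (dotv u xi - (rho * t0)^-1) <= G xi (radial (polar K) xi).
Proof.
move=> hK rho_gt0 su Ku sxi; have rad_gt0 := radial_polar_gt0 hK sxi.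
have rt0_gt0 : 0 < rho * t0 by rewrite mulr_gt0.
have [q_le0|q_gt0] := lerP (dotv u xi - (rho * t0)^-1) 0.
  by rewrite /pospart max_r // mulr0 ltW // Gd_gt0.
have uxi_gt : 1 < rho * t0 * dotv u xi.
  by move: q_gt0; rewrite subr_gt0 -[X in X < _]mulr1 ltr_pdivrMl.
have rad_le : radial (polar K) xi <= t0.
  have xix : dotv xi (rho *: u) = rho * dotv u xi by rewrite dotvC dotvZl.
  apply: le_trans (radial_polar_le Ku _) _; first by rewrite xix; nra.
  by rewrite xix -[leLHS]mul1r ler_pdivrMr; nra.
apply: le_trans (ltW (G_gt_c sxi rad_gt0 rad_le)).
have [->|n_neq0] := eqVneq (n%:R : R) 0; first by rewrite invr0 mulr0 mul0r.
have q_le : pospart (dotv u xi - (rho * t0)^-1) <= n%:R.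
  rewrite /pospart max_l; last exact: ltW.
  apply: le_trans _ (norm_dotv_sphere_le su sxi).
  by apply: le_trans _ (ler_norm _); rewrite gerBl invr_ge0 ltW.
apply: le_trans (ler_wpM2l (divr_ge0 c_ge0 (ler0n _ _)) q_le) _.
by rewrite divfK.
Qed.

Variables (mu : {measure set (borelRn R n) -> \bar R}) (eta : R).
Hypotheses (mu_fin : (mu setT < +oo)%E) (eta_gt0 : 0 < eta).
Hypothesis eta_le : forall u, sphere u -> (eta%:E <= pos_cosine mu u)%E.

Lemma integral_Gd_radial_polar_ge : exists r, forall K x,
  convex_body_o K -> K x -> r < enorm x ->
  ((c / n%:R * (eta / 2))%:E
     <= \int[mu]_(xi in @sphere R n) (G xi (radial (polar K) xi))%:E)%E.
Proof.
pose m := fine (mu (@sphere R n)).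
have m_ge0 : 0 <= m by rewrite fine_ge0.
exists (2 * m / (eta * t0)) => K x hK Kx r_lt; set rho := enorm x in r_lt.
have et0_gt0 : 0 < eta * t0 by rewrite mulr_gt0.
have rho_gt0 : 0 < rho.
  by apply: le_lt_trans _ r_lt; rewrite divr_ge0 ?mulr_ge0 // ltW.
pose u := rho^-1 *: x; pose s := (rho * t0)^-1.
have Ku : K (rho *: u) by rewrite scalerA mulfV ?gt_eqF // scale1r.
have s_ge0 : 0 <= s by rewrite invr_ge0 mulr_ge0 // ltW.
have sm_le : s * m <= eta / 2.
  move: r_lt; rewrite ltr_pdivrMr // => /ltW m_le.
  by rewrite /s mulrC ler_pdivrMr ?mulr_gt0 //; nra.
have J_ge : ((eta / 2)%:E
    <= \int[mu]_(xi in @sphere R n) (pospart (dotv u xi - s))%:E)%E.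
  rewrite -(@leeD2rE _ (s * m)%:E) //.
  apply: le_trans (le_trans (eta_le (sphere_normalize rho_gt0)) _).
    by rewrite -EFinD lee_fin; lra.
  rewrite EFinM /m fineK ?sphere_measure_fin_num //.
  exact: pos_cosine_le_shift.
rewrite EFinM; apply: le_trans (lee_wpmul2l _ J_ge) _.
  by rewrite lee_fin divr_ge0.
rewrite -ge0_integralZl_EFin //; first last.
- by rewrite divr_ge0.
- apply/measurable_EFinP/measurable_pospart/measurable_funB.
    exact: measurable_dotv.
  exact: measurable_cst.
- by move=> xi _; rewrite lee_fin pospart_ge0.
- exact: measurable_sphere.
apply: (ge0_le_integral_nomeas mu) => xi sxi.
  by rewrite -EFinM lee_fin mulr_ge0 ?divr_ge0 ?pospart_ge0.
rewrite -EFinM lee_fin.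
exact: Gd_radial_polar_ge hK rho_gt0 (sphere_normalize rho_gt0) Ku sxi.
Qed.

End radial_integral_bound.

Theorem lemma5p2 (R : realType) (n : nat) (hn : (2 <= n)%N)
  (G : 'rV[R]_n -> R -> R) (hG : class_Gd G)
  (mu : {measure set (borelRn R n) -> \bar R})
  (mu_supp : mu (~` (@sphere R n)) = 0%E)
  (mu_fin : (mu setT < +oo)%E)
  (mu_nz : mu setT <> 0%E)
  (mu_nc : forall u : 'rV[R]_n, sphere u ->
     (0 < \int[mu]_(xi in (@sphere R n)) (pospart (dotv u xi))%:E)%E)
  (K : nat -> set 'rV[R]_n) (hK : forall i, convex_body_o (K i))
  (hbd : exists M : R, forall i,
     (\int[mu]_(xi in (@sphere R n)) (G xi (radial (polar (K i)) xi))%:E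
        <= M%:E)%E) :
  exists r : R, forall i, K i `<=` eball r.
Proof.
have [M hM] := hbd.
have [eta eta_gt0 eta_le] := pos_cosine_uniform_gt0 mu_fin mu_nc.
have n_gt0 : 0 < n%:R :> R by rewrite ltr0n (leq_trans _ hn).
pose c := 2 * n%:R * (`|M| + 1) / eta.
have c_ge0 : 0 <= c by rewrite divr_ge0 ?mulr_ge0 ?ltW // ltr_wpDl.
have [t0 t0_gt0 G_gt_c] := Gd_uniform_gt hG c.
have [r large_x] :=
  integral_Gd_radial_polar_ge hG c_ge0 t0_gt0 G_gt_c mu_fin eta_gt0 eta_le.
exists r => i x Kx; rewrite /eball /= leNgt; apply/negP => r_lt.
have := le_trans (large_x _ _ (hK i) Kx r_lt) (hM i).
have -> : c / n%:R * (eta / 2) = `|M| + 1 by rewrite /c; field; rewrite !gt_eqF.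
by rewrite lee_fin; have := ler_norm M; lra.
Qed.
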